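(* Let $n\ge p\ge1$, $E=\begin{bmatrix} I_{p}\\ \mathbf{0}_{(n-p)\times p}\end{bmatrix}$, $T_\theta=\operatorname{diag}(T_{\theta_1},\dots,T_{\theta_p})$ and $T_\phi$ diagonal with strictly positive diagonal entries, $Q=\operatorname{diag}(q_1,\dots,q_p)$ with $q_i>0$, $r\in\mathbb{R}^p$, $L^{com}\in\mathbb{R}^{p\times p}$ the Laplacian of a balanced, strongly connected weighted directed graph on $\{1,\dots,p\}$, $\overline y\in\mathbb{R}^n$, $h(x)=(h_1(x_1),\dots,h_n(x_n))^T$ with $h_i$ continuously differentiable and strictly increasing, and $g(\theta)=(g_1(\theta_1),\dots,g_p(\theta_p))^T$ with each $g_i:\mathbb{R}\to\mathbb{R}$ continuously differentiable and strictly increasing. Consider the system $$T_\theta\dot\theta=-E^T(h(x)-\overline y)-(g(\theta)-\phi),\qquad T_\phi\dot\phi=g(\theta)-\phi-QL^{com}(Q\phi+r),$$ with input $-h(x)$ (where $x(\cdot)$ is an input signal) and output $Eg(\theta)$. Let $\overline x\in\mathbb{R}^n$ satisfy $h(\overline x)=\overline y$, and let $(\overline\theta,\overline\phi)$ satisfy $$\mathbf{0}=-E^T(h(\overline x)-\overline y)-(g(\overline\theta)-\overline\phi),\qquad \mathbf{0}=(g(\overline\theta)-\overline\phi)-QL^{com}(Q\overline\phi+r).$$ Then the system is incrementally passive with respect to $(\overline\theta,\overline\phi)$: the function $$V_2=\sum_{i=1}^pT_{\theta_i}\int_{\overline\theta_i}^{\theta_i}(g_i(y)-g_i(\overline\theta_i))\,dy+\tfrac12(\phi-\overline\phi)^TT_\phi(\phi-\overline\phi)$$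 is radially unbounded and satisfies along the solutions of the system $$\dot V_2=-(g(\theta)-\phi)^T(g(\theta)-\phi)-(\phi-\overline\phi)^TQL^{com}Q(\phi-\overline\phi)-(g(\theta)-g(\overline\theta))^TE^T(h(x)-h(\overline x)).$$
   Context: A weighted directed graph is balanced if at every node the weighted in-degree equals the weighted out-degree; its Laplacian is $L^{com}=D-A$ with $A$ the weighted adjacency matrix and $D$ the diagonal matrix of weighted out-degrees. Incremental passivity of $\dot z=F(z,v)$, $w=H(z)$ with respect to a constant steady state means the existence of a continuously differentiable radially unbounded function $V$ with $\dot V\le (w-\overline w)^T(v-\overline v)$ along solutions. *)

From Stdlib Require Import Reals.
From Coquelicot Require Import Coquelicot.
From HB Require Import structures.
From mathcomp Require Import all_boot all_order all_algebra.
From mathcomp Require Import Rstruct.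

Set Implicit Arguments.
Unset Strict Implicit.
Unset Printing Implicit Defensive.
Import Order.TTheory GRing.Theory Num.Theory.
Local Open Scope ring_scope.

Definition Emat (n p : nat) : 'M[R]_(n, p) :=
  \matrix_(i < n, j < p) ((i : nat) == (j : nat))%:R.

Definition vmap (m : nat) (f : 'I_m -> R -> R) (v : 'cV[R]_m) : 'cV[R]_m :=
  \col_i f i (v i 0).

Definition dotv (m : nat) (u v : 'cV[R]_m) : R := (u^T *m v) 0 0.

(* weighted digraph on 'I_p given by its weighted adjacency matrix A,
   A i j = weight of the edge i -> j (0 if absent) *)
Definition out_deg (p : nat) (A : 'M[R]_p) (i : 'I_p) : R := \sum_j A i j.
Definition in_deg (p : nat) (A : 'M[R]_p) (i : 'I_p) : R := \sum_j A j i.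
Definition nonneg_weights (p : nat) (A : 'M[R]_p) : Prop :=
  forall i j, 0 <= A i j.
Definition balanced (p : nat) (A : 'M[R]_p) : Prop :=
  forall i, out_deg A i = in_deg A i.
Definition strongly_connected (p : nat) (A : 'M[R]_p) : Prop :=
  forall i j : 'I_p, connect (fun a b => 0 < A a b) i j.
Definition laplacian (p : nat) (A : 'M[R]_p) : 'M[R]_p :=
  diag_mx (\row_i out_deg A i) - A.

Definition strictly_increasing (f : R -> R) : Prop :=
  forall a b : R, (a < b)%R -> (f a < f b)%R.
Definition cont_diff (f : R -> R) : Prop :=
  (forall x, ex_derive f x) /\ (forall x, continuous (Derive f) x).

Definition V2 (p : nat) (tth tph : 'rV[R]_p) (g : 'I_p -> R -> R)
  (thb phb th ph : 'cV[R]_p) : R :=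
  \sum_(i < p) tth 0 i *
      RInt (fun y => g i y - g i (thb i 0)) (thb i 0) (th i 0)
  + 1 / 2 * dotv (ph - phb) (diag_mx tph *m (ph - phb)).

Definition V2dot (n p : nat) (q : 'rV[R]_p) (A : 'M[R]_p)
  (h : 'I_n -> R -> R) (g : 'I_p -> R -> R) (xbar : 'cV[R]_n)
  (thb phb th ph : 'cV[R]_p) (x : 'cV[R]_n) : R :=
  - dotv (vmap g th - ph) (vmap g th - ph)
  - dotv (ph - phb) (diag_mx q *m laplacian A *m diag_mx q *m (ph - phb))
  - dotv (vmap g th - vmap g thb)
         ((Emat n p)^T *m (vmap h x - vmap h xbar)).

From Stdlib Require Import Reals.
From Coquelicot Require Import Coquelicot.
From mathcomp Require Import all_boot all_order all_algebra.
From mathcomp Require Import Rstruct ring lra.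

Set Implicit Arguments.
Unset Strict Implicit.
Unset Printing Implicit Defensive.

Import Order.TTheory GRing.Theory Num.Theory.
Local Open Scope ring_scope.

(* Each summand of V_2 is the integral from thb_i to th_i of g_i - g_i(thb_i),
   a Bregman divergence of a primitive of g_i: it is nonnegative and, g_i being
   strictly increasing, grows at least linearly in |th_i - thb_i|.  With the
   positive definite quadratic term in phi, V_2 is radially unbounded.
   Along solutions dV_2/dt = (T_th th')^T (g(th) - g(thb)) + (T_ph ph')^T (ph - phb).
   At the steady state phb = g(thb) and Q L (Q phb + r) = 0; substituting the
   dynamics, the cross terms combine into -|g(th) - ph|^2, which leaves the
   Laplacian term and the supply rate.  For a balanced graph
   2 z^T L z = sum_ij a_ij (z_i - z_j)^2 >= 0, which gives the passivity
   inequality. *)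

Lemma RInt_ge_const (g : R -> R) (k a b : R) : a <= b -> ex_RInt g a b ->
  (forall x, a < x < b -> k <= g x) -> k * (b - a) <= RInt g a b.
Proof.
move=> /RleP le_ab ex_g g_ge.
have := RInt_le (fun _ => k) g a b le_ab (ex_RInt_const a b k) ex_g.
rewrite RInt_const /scal /= /mult /= RmultE RminusE mulrC => H.
by apply/RleP; apply: H => x [/RltP ? /RltP ?]; apply/RleP; apply: g_ge; apply/andP.
Qed.

Definition bregman (f : R -> R) (a z : R) : R := RInt (fun y => f y - f a) a z.

Section Bregman.

Variable f : R -> R.
Hypothesis f_mono : {homo f : x y / x <= y}.
Hypothesis f_cont : forall x, continuous f x.

Lemma ex_RInt_sub_const (k a b : R) : ex_RInt (fun y => f y - k) a b.
Proof.
apply: ex_RInt_continuous => z _.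
apply: (continuous_minus f (fun _ => k)); [exact: f_cont | exact: continuous_const].
Qed.

Lemma bregman_ge_right (a b z : R) : a <= b -> a <= z ->
  (f b - f a) * (z - b) <= bregman f a z.
Proof.
move=> le_ab le_az.
have RInt_ge0 c d : a <= c <= d -> 0 <= RInt (fun y => f y - f a) c d.
  move=> /andP[le_ac le_cd]; rewrite -(mul0r (d - c)).
  apply: RInt_ge_const => // [|x /andP[lt_cx _]]; first exact: ex_RInt_sub_const.
  by rewrite subr_ge0 f_mono // ltW // (le_lt_trans le_ac).
have fab_ge0 : 0 <= f b - f a by rewrite subr_ge0 f_mono.
have [le_zb | lt_bz] := lerP z b.
  apply: le_trans (RInt_ge0 a z _); last by rewrite lexx.
  by apply: mulr_ge0_le0; rewrite // subr_le0.
have -> : bregman f a z =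
    RInt (fun y => f y - f a) a b + RInt (fun y => f y - f a) b z.
  by rewrite /bregman -(RInt_Chasles _ a b z) //; exact: ex_RInt_sub_const.
have init_ge0 : 0 <= RInt (fun y => f y - f a) a b by apply: RInt_ge0; rewrite lexx.
suff : (f b - f a) * (z - b) <= RInt (fun y => f y - f a) b z by lra.
apply: RInt_ge_const; [exact: ltW | exact: ex_RInt_sub_const |].
by move=> x /andP[lt_bx _]; rewrite lerD2r f_mono // ltW.
Qed.

End Bregman.

Lemma continuous_reflect (f : R -> R) : (forall x, continuous f x) ->
  forall x, continuous (fun y : R => - f (- y)) x.
Proof.
move=> f_cont x; apply: continuous_opp.
exact: continuous_comp Ropp f x (continuous_opp _ _ (continuous_id x)) (f_cont _).
Qed.

Lemma bregman_reflect (f : R -> R) (a z : R) : (forall x, continuous f x) ->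
  bregman f a z = bregman (fun y => - f (- y)) (- a) (- z).
Proof.
move=> f_cont; rewrite /bregman.
(* The arguments of [RInt_comp_lin] are read in [R_scope], where [-1] is
   [IZR (-1)]. *)
have N1 : IZR (-1) = - 1 by [].
have := RInt_comp_lin (fun y => - f (- y) - - f (- - a)) (-1) 0 a z.
rewrite N1 !RmultE !RplusE !mulN1r !addr0 => <-; last first.
  by apply: (@ex_RInt_sub_const (fun y => - f (- y))); exact: continuous_reflect.
apply: RInt_ext => y _.
by rewrite /scal /= /mult /= !RmultE RplusE !mulN1r addr0 !opprK opprD opprK addrC.
Qed.

Lemma bregman_ge_left (f : R -> R) (a b z : R) : {homo f : x y / x <= y} ->
  (forall x, continuous f x) -> b <= a -> z <= a ->
  (f a - f b) * (b - z) <= bregman f a z.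
Proof.
move=> f_mono f_cont le_ba le_za.
rewrite bregman_reflect //.
have reflect_mono : {homo (fun y => - f (- y)) : x y / x <= y}.
  by move=> x y le_xy; rewrite lerN2 f_mono // lerN2.
have le_ab' : - a <= - b by rewrite lerN2.
have le_az' : - a <= - z by rewrite lerN2.
have := bregman_ge_right reflect_mono (continuous_reflect f_cont) le_ab' le_az'.
by rewrite !opprK addrC [- z + _]addrC.
Qed.

Lemma bregman_ge0 (f : R -> R) (a z : R) : {homo f : x y / x <= y} ->
  (forall x, continuous f x) -> 0 <= bregman f a z.
Proof.
move=> f_mono f_cont; have [le_az | lt_za] := lerP a z.
  by have := bregman_ge_right f_mono f_cont (lexx a) le_az; rewrite subrr mul0r.
by have := bregman_ge_left f_mono f_cont (lexx a) (ltW lt_za); rewrite subrr mul0r.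
Qed.

Lemma is_derive_sum (I : Type) (r : seq I) (F : I -> R -> R) (dF : I -> R)
    (t : R) :
  (forall i, is_derive (F i) t (dF i)) ->
  is_derive (fun s => \sum_(i <- r) F i s) t (\sum_(i <- r) dF i).
Proof.
move=> F_derive; elim: r => [|a r IHr].
  rewrite big_nil; apply: (@is_derive_ext R_AbsRing R_NormedModule (fun=> 0)).
    by move=> s; rewrite big_nil.
  exact: is_derive_const.
rewrite big_cons; apply: (@is_derive_ext R_AbsRing R_NormedModule).
  by move=> s; rewrite big_cons.
exact: is_derive_plus (F_derive a) IHr.
Qed.

Lemma is_derive_bregman (f : R -> R) (a : R) (y : R -> R) (t dy : R) :
  (forall x, continuous f x) -> is_derive y t dy ->
  is_derive (fun s => bregman f a (y s)) t (dy * (f (y t) - f a)).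
Proof.
move=> f_cont y_derive; apply: is_derive_comp y_derive.
apply: (is_derive_RInt (fun z => f z - f a) (bregman f a) a).
  by apply: filter_forall => z; apply: RInt_correct; exact: ex_RInt_sub_const.
exact: continuous_minus (f_cont _) (continuous_const _ _).
Qed.

Lemma is_derive_sqr_sub (y : R -> R) (b t dy : R) : is_derive y t dy ->
  is_derive (fun s => (y s - b) ^+ 2) t (2 * dy * (y t - b)).
Proof.
move=> y_derive.
have dyb : is_derive (fun s => y s - b) t dy.
  have := is_derive_minus y (fun _ => b) t dy 0 y_derive (is_derive_const b t).
  by rewrite minus_zero_r.
have := is_derive_mult _ _ _ _ _ dyb dyb Rmult_comm.
suff -> : plus (mult dy (y t - b)) (mult (y t - b) dy) = 2 * dy * (y t - b) by [].
rewrite /plus /mult /= RplusE !RmultE; ring.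
Qed.

Definition coercive (u : R -> R) : Prop :=
  forall M : R, exists K : R, forall z : R, K < `|z| -> M < u z.

Lemma coercive_of_linear_bounds (u : R -> R) (c1 c2 b1 b2 : R) :
  0 < c1 -> 0 < c2 ->
  (forall z, b1 <= z -> c1 * (z - b1) <= u z) ->
  (forall z, z <= b2 -> c2 * (b2 - z) <= u z) -> coercive u.
Proof.
move=> c1_gt0 c2_gt0 u_right u_left M.
have [m m_ge0 m_big] : exists2 m : R, 0 <= m &
    forall w, m < w -> M < c1 * w /\ M < c2 * w.
  exists (`|c1^-1 * M| + `|c2^-1 * M|); first by rewrite addr_ge0.
  move=> w lt_mw; rewrite -!ltr_pdivrMl //.
  by split; apply: le_lt_trans (ler_norm _) (le_lt_trans _ lt_mw);
    rewrite ?lerDl ?lerDr.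
have := ler_norm b1; have := ler_norm (- b2); rewrite normrN.
have := normr_ge0 b1; have := normr_ge0 b2.
move=> b2_ge0 b1_ge0 b2_le b1_le.
exists (`|b1| + `|b2| + m) => z lt_Kz.
have [z_ge0 | z_lt0] := lerP 0 z.
- rewrite (ger0_norm z_ge0) in lt_Kz.
  apply: lt_le_trans (u_right z _); last lra.
  by apply: (m_big _ _).1; lra.
- rewrite (ltr0_norm z_lt0) in lt_Kz.
  apply: lt_le_trans (u_left z _); last lra.
  by apply: (m_big _ _).2; lra.
Qed.

Lemma coercive_sum (p : nat) (u : 'I_p -> R -> R) :
  (forall i z, 0 <= u i z) -> (forall i, coercive (u i)) ->
  forall M : R, exists K : R, forall x : 'cV[R]_p,
    (exists i, K < `|x i 0|) -> M < \sum_i u i (x i 0).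
Proof.
move=> u_ge0 u_coercive M.
have [K K_spec] := fin_all_exists (fun i => u_coercive i M).
exists (\big[Num.max/0]_i K i) => x [i lt_Kx].
rewrite (bigD1 i) //=; apply: lt_le_trans (K_spec i _ _) _.
  exact: le_lt_trans (le_bigmax _ _ _) lt_Kx.
by rewrite lerDl sumr_ge0.
Qed.

Lemma bregman_coercive (f : R -> R) (a c : R) : strictly_increasing f ->
  (forall x, continuous f x) -> 0 < c -> coercive (fun z => c * bregman f a z).
Proof.
move=> f_incr f_cont c_gt0.
have f_mono : {homo f : x y / x <= y} by exact: ltW_homo.
have right z : a + 1 <= z ->
    c * (f (a + 1) - f a) * (z - (a + 1)) <= c * bregman f a z.
  move=> le_z; rewrite -mulrA ler_wpM2l ?(ltW c_gt0) //.
  apply: bregman_ge_right => //; first by rewrite lerDl.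
  by apply: le_trans le_z; rewrite lerDl.
have left z : z <= a - 1 ->
    c * (f a - f (a - 1)) * ((a - 1) - z) <= c * bregman f a z.
  move=> le_z; rewrite -mulrA ler_wpM2l ?(ltW c_gt0) //.
  apply: bregman_ge_left => //; first by rewrite gerDl oppr_le0.
  by apply: le_trans le_z _; rewrite gerDl oppr_le0.
apply: (coercive_of_linear_bounds _ _ right left);
  rewrite mulr_gt0 // subr_gt0 f_incr //; first by rewrite ltrDl.
by rewrite gtrDl oppr_lt0.
Qed.

Lemma sqr_coercive (b c : R) : 0 < c -> coercive (fun z => c * (z - b) ^+ 2).
Proof.
move=> c_gt0.
have sqr_ge (x : R) : x - 1 <= x ^+ 2 by have := sqr_ge0 (x - 2^-1); nra.
have right z : b + 1 <= z -> c * (z - (b + 1)) <= c * (z - b) ^+ 2.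
  by move=> _; rewrite ler_wpM2l ?(ltW c_gt0) //; have := sqr_ge (z - b); lra.
have left z : z <= b - 1 -> c * ((b - 1) - z) <= c * (z - b) ^+ 2.
  move=> _; rewrite ler_wpM2l ?(ltW c_gt0) // -sqrrN opprB.
  by have := sqr_ge (b - z); lra.
exact: (coercive_of_linear_bounds c_gt0 c_gt0 right left).
Qed.

Lemma dotvE (m : nat) (u v : 'cV[R]_m) : dotv u v = \sum_i u i 0 * v i 0.
Proof. by rewrite /dotv mxE; apply: eq_bigr => i _; rewrite mxE. Qed.

Lemma dotv_diag (m : nat) (d : 'rV[R]_m) (u : 'cV[R]_m) :
  dotv u (diag_mx d *m u) = \sum_i d 0 i * u i 0 ^+ 2.
Proof. by rewrite dotvE; apply: eq_bigr => i _; rewrite mul_diag_mx mxE mulrCA. Qed.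

Lemma dotv_mulmx (m k : nat) (M : 'M[R]_(m, k)) (u : 'cV[R]_k) (v : 'cV[R]_m) :
  dotv (M *m u) v = dotv u (M^T *m v).
Proof. by rewrite /dotv trmx_mul mulmxA. Qed.

Lemma dotvNr (m : nat) (u v : 'cV[R]_m) : dotv u (- v) = - dotv u v.
Proof. by rewrite /dotv mulmxN mxE. Qed.

Lemma dotv_ge0 (m : nat) (u : 'cV[R]_m) : 0 <= dotv u u.
Proof. by rewrite dotvE sumr_ge0 // => i _; rewrite -expr2 sqr_ge0. Qed.

Lemma dissipation_identity (m : nat) (a b ph e w : 'cV[R]_m) :
  dotv (- e - (a - ph)) (a - b) + dotv ((a - ph) - w) (ph - b) =
  - dotv (a - ph) (a - ph) - dotv (ph - b) w - dotv (a - b) e.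
Proof.
rewrite !dotvE -!sumrN -!big_split /=.
by apply: eq_bigr => i _; rewrite !mxE; ring.
Qed.

Lemma laplacian_quad_form (p : nat) (A : 'M[R]_p) (z : 'cV[R]_p) : balanced A ->
  2 * dotv z (laplacian A *m z) = \sum_i \sum_j A i j * (z i 0 - z j 0) ^+ 2.
Proof.
move=> A_bal.
have out_in : \sum_i \sum_j A i j * z i 0 ^+ 2 = \sum_i \sum_j A i j * z j 0 ^+ 2.
  rewrite [RHS]exchange_big /=; apply: eq_bigr => i _.
  by rewrite -!mulr_suml; have := A_bal i; rewrite /out_deg /in_deg => ->.
have -> : dotv z (laplacian A *m z) =
    \sum_i \sum_j A i j * z i 0 ^+ 2 - \sum_i \sum_j A i j * (z i 0 * z j 0).
  rewrite dotvE -sumrB; apply: eq_bigr => i _.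
  rewrite /laplacian mulmxBl mul_diag_mx !mxE mulrBr /out_deg mulrCA -expr2.
  rewrite mulr_suml mulr_sumr.
  by congr (_ - _); apply: eq_bigr => j _; ring.
transitivity (\sum_i \sum_j A i j * z i 0 ^+ 2 + \sum_i \sum_j A i j * z j 0 ^+ 2
              - 2 * \sum_i \sum_j A i j * (z i 0 * z j 0)).
  by rewrite -out_in; ring.
rewrite mulr_sumr -big_split -sumrB; apply: eq_bigr => i _.
by rewrite mulr_sumr -big_split -sumrB; apply: eq_bigr => j _ /=; ring.
Qed.

Lemma laplacian_psd (p : nat) (A : 'M[R]_p) (z : 'cV[R]_p) :
  nonneg_weights A -> balanced A -> 0 <= dotv z (laplacian A *m z).
Proof.
move=> A_ge0 A_bal; rewrite -(pmulr_rge0 _ (ltr0Sn _ 1)) laplacian_quad_form //.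
by do 2![apply: sumr_ge0 => ? _]; rewrite mulr_ge0 ?sqr_ge0.
Qed.

Lemma V2E (p : nat) (tth tph : 'rV[R]_p) (g : 'I_p -> R -> R)
    (thb phb th ph : 'cV[R]_p) :
  V2 tth tph g thb phb th ph =
  \sum_i tth 0 i * bregman (g i) (thb i 0) (th i 0)
  + \sum_i 2^-1 * tph 0 i * (ph i 0 - phb i 0) ^+ 2.
Proof.
rewrite /V2 RplusE RmultE RdivE R1E IZRposE INRE mul1r dotv_diag mulr_sumr.
by congr (_ + _); apply: eq_bigr => i _; rewrite mulrA !mxE.
Qed.

Lemma cont_diff_continuous (f : R -> R) : cont_diff f -> forall x, continuous f x.
Proof. by case=> f_ex _ x; apply: ex_derive_continuous. Qed.

Lemma V2_radially_unbounded (p : nat) (tth tph : 'rV[R]_p) (g : 'I_p -> R -> R)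
    (thb phb : 'cV[R]_p) :
  (forall i, 0 < tth 0 i) -> (forall i, 0 < tph 0 i) ->
  (forall i, strictly_increasing (g i)) -> (forall i x, continuous (g i) x) ->
  forall M : R, exists K : R, forall th ph : 'cV[R]_p,
    (exists i, K < `|th i 0| \/ K < `|ph i 0|) ->
    M < V2 tth tph g thb phb th ph.
Proof.
move=> tth_gt0 tph_gt0 g_incr g_cont M.
have g_mono i : {homo g i : x y / x <= y} by exact: ltW_homo (g_incr i).
have tph2_gt0 i : 0 < 2^-1 * tph 0 i by rewrite mulr_gt0 ?invr_gt0.
pose u1 i z := tth 0 i * bregman (g i) (thb i 0) z.
pose u2 i z := 2^-1 * tph 0 i * (z - phb i 0) ^+ 2.
have u1_ge0 i z : 0 <= u1 i z by rewrite mulr_ge0 ?bregman_ge0 // ltW.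
have u2_ge0 i z : 0 <= u2 i z by rewrite mulr_ge0 ?sqr_ge0 // ltW.
have [K1 K1_spec] := coercive_sum u1_ge0
  (fun i => bregman_coercive _ (g_incr i) (g_cont i) (tth_gt0 i)) M.
have [K2 K2_spec] := coercive_sum u2_ge0
  (fun i => sqr_coercive _ (tph2_gt0 i)) M.
exists (Num.max K1 K2) => th ph [i [lt_th | lt_ph]]; rewrite V2E.
- apply: lt_le_trans (K1_spec th _) _.
    by exists i; apply: le_lt_trans lt_th; rewrite le_max lexx.
  by rewrite lerDl sumr_ge0 // => j _; exact: u2_ge0.
- apply: lt_le_trans (K2_spec ph _) _.
    by exists i; apply: le_lt_trans lt_ph; rewrite le_max lexx orbT.
  by rewrite lerDr sumr_ge0 // => j _; exact: u1_ge0.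
Qed.

Lemma is_derive_V2 (p : nat) (tth tph : 'rV[R]_p) (g : 'I_p -> R -> R)
    (thb phb : 'cV[R]_p) (th ph : R -> 'cV[R]_p) (t : R) (dth dph : 'cV[R]_p) :
  (forall i x, continuous (g i) x) ->
  (forall i, is_derive (fun s => th s i 0) t (dth i 0)) ->
  (forall i, is_derive (fun s => ph s i 0) t (dph i 0)) ->
  is_derive (fun s => V2 tth tph g thb phb (th s) (ph s)) t
    (dotv (diag_mx tth *m dth) (vmap g (th t) - vmap g thb)
     + dotv (diag_mx tph *m dph) (ph t - phb)).
Proof.
move=> g_cont th_derive ph_derive.
apply: (is_derive_ext (fun s =>
    \sum_i tth 0 i * bregman (g i) (thb i 0) (th s i 0)
  + \sum_i 2^-1 * tph 0 i * (ph s i 0 - phb i 0) ^+ 2)) => [s|].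
  by rewrite V2E.
rewrite !dotvE; apply: is_derive_plus; apply: is_derive_sum => i;
  rewrite mul_diag_mx !mxE -mulrA.
  by apply: is_derive_scal; exact: is_derive_bregman.
suff -> : tph 0 i * (dph i 0 * (ph t i 0 - phb i 0)) =
          2^-1 * tph 0 i * (2 * dph i 0 * (ph t i 0 - phb i 0)).
  by apply: is_derive_scal; exact: is_derive_sqr_sub.
by field.
Qed.

Lemma V2dot_le_supply (n p : nat) (q : 'rV[R]_p) (A : 'M[R]_p)
    (h : 'I_n -> R -> R) (g : 'I_p -> R -> R) (xbar : 'cV[R]_n)
    (thb phb th ph : 'cV[R]_p) (x : 'cV[R]_n) :
  nonneg_weights A -> balanced A ->
  V2dot q A h g xbar thb phb th ph x <=
  dotv (Emat n p *m vmap g th - Emat n p *m vmap g thb) (- vmap h x - - vmap h xbar).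
Proof.
move=> A_ge0 A_bal.
have QLQ_ge0 :
    0 <= dotv (ph - phb) (diag_mx q *m laplacian A *m diag_mx q *m (ph - phb)).
  by rewrite -!mulmxA -{1}(tr_diag_mx q) -dotv_mulmx laplacian_psd.
rewrite -mulmxBr dotv_mulmx -opprD mulmxN dotvNr.
rewrite /V2dot !RminusE RoppE; have := dotv_ge0 (vmap g th - ph); lra.
Qed.

Lemma steady_state_output (n p : nat) (M : 'M[R]_(p, n)) (y : 'cV[R]_n)
    (a b : 'cV[R]_p) :
  0 = - (M *m (y - y)) - (a - b) -> a = b.
Proof.
by rewrite subrr mulmx0 oppr0 sub0r => /eqP; rewrite eq_sym oppr_eq0 subr_eq0 => /eqP.
Qed.

Lemma mulmx_affine_shift (m k : nat) (B : 'M[R]_(m, k)) (Q : 'M[R]_(k, m))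
    (r : 'cV[R]_k) (phb ph : 'cV[R]_m) :
  B *m (Q *m phb + r) = 0 -> B *m (Q *m ph + r) = B *m Q *m (ph - phb).
Proof.
move=> B_eq0; rewrite -[LHS]subr0 -B_eq0 -mulmxBr -mulmxA; congr (_ *m _).
by rewrite mulmxBr opprD addrACA subrr addr0.
Qed.

Theorem lemma7 (n p : nat) (Hp : (1 <= p)%N) (Hpn : (p <= n)%N)
  (tth tph q : 'rV[R]_p)
  (Htth : forall i, 0 < tth 0 i) (Htph : forall i, 0 < tph 0 i)
  (Hq : forall i, 0 < q 0 i)
  (r : 'cV[R]_p) (A : 'M[R]_p)
  (HA : nonneg_weights A) (Hbal : balanced A) (Hsc : strongly_connected A)
  (ybar : 'cV[R]_n)
  (h : 'I_n -> R -> R) (Hh1 : forall i, cont_diff (h i))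
  (Hh2 : forall i, strictly_increasing (h i))
  (g : 'I_p -> R -> R) (Hg1 : forall i, cont_diff (g i))
  (Hg2 : forall i, strictly_increasing (g i))
  (xbar : 'cV[R]_n) (Hxbar : vmap h xbar = ybar)
  (thb phb : 'cV[R]_p)
  (Heq1 : 0 = - ((Emat n p)^T *m (vmap h xbar - ybar)) - (vmap g thb - phb))
  (Heq2 : 0 = (vmap g thb - phb)
              - diag_mx q *m laplacian A *m (diag_mx q *m phb + r)) :
  (* V_2 is radially unbounded *)
  (forall M : R, exists K : R, forall th ph : 'cV[R]_p,
      (exists i, K < `|th i 0| \/ K < `|ph i 0|) ->
      M < V2 tth tph g thb phb th ph)
  /\
  (* along solutions: dV_2/dt = V2dot *)
  (forall (th ph : R -> 'cV[R]_p) (x : R -> 'cV[R]_n) (t : R)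
          (dth dph : 'cV[R]_p),
      (forall i, is_derive (fun s => th s i 0) t (dth i 0)) ->
      (forall i, is_derive (fun s => ph s i 0) t (dph i 0)) ->
      diag_mx tth *m dth =
        - ((Emat n p)^T *m (vmap h (x t) - ybar)) - (vmap g (th t) - ph t) ->
      diag_mx tph *m dph =
        (vmap g (th t) - ph t)
        - diag_mx q *m laplacian A *m (diag_mx q *m ph t + r) ->
      is_derive (fun s => V2 tth tph g thb phb (th s) (ph s)) t
        (V2dot q A h g xbar thb phb (th t) (ph t) (x t)))
  /\
  (* incremental passivity inequality: input v = -h(x), output w = E g(theta) *)
  (forall (th ph : 'cV[R]_p) (x : 'cV[R]_n),
      V2dot q A h g xbar thb phb th ph x <=
      dotv ((Emat n p) *m vmap g th - (Emat n p) *m vmap g thb)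
           (- vmap h x - - vmap h xbar)).
Proof.
have g_cont i := cont_diff_continuous (Hg1 i).
split; first exact: V2_radially_unbounded.
split; last by move=> th ph x; exact: V2dot_le_supply.
move=> th ph x t dth dph th_derive ph_derive theta_eq phi_eq.
have phbE : vmap g thb = phb.
  by move: Heq1; rewrite -Hxbar; exact: steady_state_output.
have consensus : diag_mx q *m laplacian A *m (diag_mx q *m phb + r) = 0.
  by move/eqP: Heq2; rewrite phbE subrr sub0r eq_sym oppr_eq0 => /eqP.
rewrite -Hxbar in theta_eq; rewrite (mulmx_affine_shift _ consensus) in phi_eq.
suff -> : V2dot q A h g xbar thb phb (th t) (ph t) (x t) =
    dotv (diag_mx tth *m dth) (vmap g (th t) - vmap g thb)
    + dotv (diag_mx tph *m dph) (ph t - phb) by exact: is_derive_V2.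
by rewrite theta_eq phi_eq -phbE dissipation_identity.
Qed.
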